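(* In the setting of the context, if $\pi_\alpha\to0$ as $n\to\infty$, then $\widehat\pi_{uc}=n^{-1}\sum_{i=1}^n\delta_i\xrightarrow{\mathbb{P}}\pi_{uc}$.
   Context: For each $n$ we observe $(Y_i,X_i,\delta_i)$, $i=1,\dots,n$, with $T_i=X_i^\top\beta+\alpha_i+\xi_i$, $Y_i=\min(T_i,C_i)$, $\delta_i=\mathbb{1}\{T_i\le C_i\}$; $\{C_i,X_i,\xi_i\}_i$ are independent and identically distributed, with the distribution of $(X_i,\xi_i)$ (and of $C_i$) not depending on $n$, while the distribution of $\alpha_i$ may depend on $n$. $\pi_\alpha=\mathbb{P}(\alpha_i\neq0)$. With $\tilde T_i=T_i-\alpha_i$ and $\tilde\delta_i=\mathbb{1}\{\tilde T_i\le C_i\}$, $\pi_{uc}=\mathbb{P}(\tilde\delta_1=1)$. *)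

From HB Require Import structures.
From mathcomp Require Import all_boot all_order all_algebra.
From mathcomp Require Import all_classical all_reals all_analysis.
Set Implicit Arguments. Unset Strict Implicit. Unset Printing Implicit Defensive.
Import Order.TTheory GRing.Theory Num.Theory.
Local Open Scope classical_set_scope.
Local Open Scope ring_scope.

(* Independence: product rule for every finite (duplicate-free) set of indices
   and every choice of Borel rectangles; rectangles form a pi-system generating
   the product sigma-algebra, so this is the usual notion. *)
Definition rect_event {d} {Omega : measurableType d} {R : realType} {J : finType}
  (Z : J -> Omega -> R) (A : J -> set R) : set Omega :=
  \bigcap_(j in [set: J]) (Z j @^-1` A j).

Definition iid_vectors {d} {Omega : measurableType d} {R : realType}
  (P : probability Omega R) (J : finType) (Z : nat -> J -> Omega -> R) : Prop :=
  (forall i j, measurable_fun setT (Z i j)) /\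
  (forall (s : seq nat) (A : nat -> J -> set R),
      uniq s -> (forall i j, measurable (A i j)) ->
      P (\bigcap_(i in [set` s]) rect_event (Z i) (A i))
      = (\prod_(i <- s) P (rect_event (Z i) (A i)))%E) /\
  (forall i (A : J -> set R), (forall j, measurable (A j)) ->
      P (rect_event (Z i) A) = P (rect_event (Z 0%N) A)).

Definition CXxi {T R : Type} {p : nat} (C xi : nat -> T -> R)
  (X : nat -> 'I_p -> T -> R) (i : nat) (j : option (option 'I_p)) : T -> R :=
  match j with
  | None => C i
  | Some None => xi i
  | Some (Some k) => X i k
  end.

Definition lin {T} {R : realType} {p : nat} (X : nat -> 'I_p -> T -> R)
  (beta : 'I_p -> R) (i : nat) (w : T) : R := \sum_(k < p) X i k w * beta k.

Definition delta {T} {R : realType} {p : nat} (C xi : nat -> T -> R)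
  (X : nat -> 'I_p -> T -> R) (alpha : nat -> nat -> T -> R) (beta : 'I_p -> R)
  (n i : nat) (w : T) : R :=
  (if lin X beta i w + alpha n i w + xi i w <= C i w then 1 else 0).

(* hat pi_uc = n^{-1} sum_{i=1}^n delta_i (indices shifted to 0..n-1) *)
Definition pi_uc_hat {T} {R : realType} {p : nat} (C xi : nat -> T -> R)
  (X : nat -> 'I_p -> T -> R) (alpha : nat -> nat -> T -> R) (beta : 'I_p -> R)
  (n : nat) (w : T) : R :=
  n%:R^-1 * \sum_(i < n) delta C xi X alpha beta n i w.

(* pi_uc = P(tilde delta_1 = 1) = P(X_1^T beta + xi_1 <= C_1) *)
Definition pi_uc {d} {Omega : measurableType d} {R : realType}
  (P : probability Omega R) {p : nat} (C xi : nat -> Omega -> R)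
  (X : nat -> 'I_p -> Omega -> R) (beta : 'I_p -> R) : R :=
  fine (P [set w | lin X beta 0%N w + xi 0%N w <= C 0%N w]).

Definition pi_alpha {d} {Omega : measurableType d} {R : realType}
  (P : probability Omega R) (alpha : nat -> nat -> Omega -> R) (n : nat) : \bar R :=
  P [set w | alpha n 0%N w != 0].

From HB Require Import structures.
From mathcomp Require Import all_boot all_order all_algebra.
From mathcomp Require Import all_classical all_reals all_analysis.
From mathcomp Require Import ring lra measurable_realfun.
Import Order.TTheory GRing.Theory Num.Theory numFieldNormedType.Exports.
Local Open Scope classical_set_scope.
Local Open Scope ring_scope.

(* The indicator delta_i differs from the uncensored indicator
   1{X_i^T beta + xi_i <= C_i} only where alpha_{n,i} <> 0, so
   |pi_uc_hat - pi_uc| <= |n^-1 sum_i 1{X_i^T beta + xi_i <= C_i} - pi_uc|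
                          + n^-1 sum_i 1{alpha_{n,i} <> 0}.
   The uncensored events are pairwise independent with probability pi_uc, so
   Chebyshev's inequality bounds the tail of the first term by O(1/n); Markov's
   inequality bounds the tail of the second by O(pi_alpha). The independence of
   these events, which are not rectangles, follows from the product rule on
   rectangles because finite measures agreeing on the pi-system of rectangles
   agree on the sigma-algebra it generates. *)

(* [J -> R] under a new name, to carry the sigma-algebra generated by Borel
   rectangles. *)
Definition vect (R : realType) (J : finType) := J -> R.
HB.instance Definition _ (R : realType) (J : finType) := gen_eqMixin (vect R J).
HB.instance Definition _ (R : realType) (J : finType) := gen_choiceMixin (vect R J).
HB.instance Definition _ (R : realType) (J : finType) :=
  isPointed.Build (vect R J) (fun=> 0).

Section rectangles.
Context {R : realType} {J : finType}.

Definition rectangle (A : J -> set R) : set (vect R J) :=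
  [set v | forall j, A j (v j)].

Definition rectangles : set (set (vect R J)) :=
  [set S | exists2 A, (forall j, measurable (A j)) & S = rectangle A].

Local Notation mvect := (g_sigma_algebraType rectangles).

Lemma measurable_coord j : measurable_fun setT (fun v : mvect => v j).
Proof.
move=> _ B mB; rewrite setTI; apply: sub_sigma_algebra.
exists (fun k => if k == j then B else setT); first by move=> k; case: eqP.
apply/seteqP; split => v /=; first by move=> Bv k; case: eqP => // ->.
by move=> /(_ j); rewrite eqxx.
Qed.

Lemma setI_closed_rectangles : setI_closed rectangles.
Proof.
move=> _ _ [A mA ->] [B mB ->]; exists (fun j => A j `&` B j).
  by move=> j; exact: measurableI.
apply/seteqP; split => v /=; first by move=> [vA vB] j.
by move=> vAB; split => j; case: (vAB j).
Qed.

Lemma rectangles_setT : rectangles setT.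
Proof. by exists (fun=> setT) => //; apply/seteqP. Qed.

Lemma measure_unique_rectangles (m1 m2 : {measure set mvect -> \bar R}) :
  (m1 setT < +oo)%E ->
  (forall A, (forall j, measurable (A j)) -> m1 (rectangle A) = m2 (rectangle A)) ->
  forall S, measurable S -> m1 S = m2 S.
Proof.
move=> m1_fin m12 S mS.
apply: (@measure_unique _ _ mvect rectangles (fun=> setT) erefl
  setI_closed_rectangles (fun=> rectangles_setT) _ m1 m2 _ (fun=> m1_fin) S mS).
  by rewrite bigcup_const.
by move=> _ [A mA ->]; exact: m12.
Qed.

End rectangles.

Notation mvect R J := (g_sigma_algebraType (@rectangles R J)).

Section joint.
Context {R : realType} {J : finType} {d} {Omega : measurableType d}.
Implicit Types (Z : J -> Omega -> R) (A : J -> set R).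

Definition joint Z : Omega -> mvect R J := fun w j => Z j w.

Lemma preimage_joint_rectangle Z A : joint Z @^-1` rectangle A = rect_event Z A.
Proof. by apply/seteqP; split => w /= Zw j; [move=> _|]; apply: Zw. Qed.

Lemma measurable_rect_event Z A :
  (forall j, measurable_fun setT (Z j)) -> (forall j, measurable (A j)) ->
  measurable (rect_event Z A).
Proof.
move=> mZ mA; apply: fin_bigcap_measurable => // j _.
by rewrite -[X in measurable X]setTI; exact: mZ.
Qed.

Lemma measurable_joint Z :
  (forall j, measurable_fun setT (Z j)) -> measurable_fun setT (joint Z).
Proof.
move=> mZ.
apply: (@measurability _ _ Omega (mvect R J) setT (joint Z) rectangles erefl).
move=> _ [_ [A mA ->] <-].
by rewrite setTI preimage_joint_rectangle; exact: measurable_rect_event.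
Qed.

Variable P : probability Omega R.

Lemma joint_dist_eq Z Z' :
  (forall j, measurable_fun setT (Z j)) -> (forall j, measurable_fun setT (Z' j)) ->
  (forall A, (forall j, measurable (A j)) -> P (rect_event Z A) = P (rect_event Z' A)) ->
  forall S, measurable S -> P (joint Z @^-1` S) = P (joint Z' @^-1` S).
Proof.
move=> mZ mZ' ZZ' S mS.
apply: (measure_unique_rectangles (pushforward P (joint Z))
  (pushforward P (joint Z'))) => //; try exact: measurable_joint.
- by move=> ? /=; rewrite /pushforward preimage_setT ltey_eq fin_num_measure.
- by move=> ? ? A mA /=; rewrite /pushforward !preimage_joint_rectangle; exact: ZZ'.
Qed.

Lemma joint_indep_event Z (B : set Omega) :
  (forall j, measurable_fun setT (Z j)) -> measurable B ->
  (forall A, (forall j, measurable (A j)) ->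
     P (rect_event Z A `&` B) = (P (rect_event Z A) * P B)%E) ->
  forall S, measurable S -> P (joint Z @^-1` S `&` B) = (P (joint Z @^-1` S) * P B)%E.
Proof.
move=> mZ mB ZB S mS.
pose r := NngNum (fine_ge0 (measure_ge0 P B)).
have PB : P B = (r%:num)%:E by rewrite /= fineK ?fin_num_measure.
rewrite PB muleC.
apply: (measure_unique_rectangles (pushforward (mrestr P mB) (joint Z))
  (mscale r (pushforward P (joint Z)))) => //; try exact: measurable_joint.
- move=> ? /=; rewrite /pushforward /mrestr preimage_setT setTI.
  by rewrite ltey_eq fin_num_measure.
- move=> ? ? A mA /=; rewrite /pushforward /mrestr /mscale /=.
  by rewrite preimage_joint_rectangle ZB // -preimage_joint_rectangle muleC PB.
Qed.

End joint.

Section iid.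
Context {R : realType} {J : finType} {d} {Omega : measurableType d}.
Context {P : probability Omega R} {Z : nat -> J -> Omega -> R}.
Hypothesis iidZ : iid_vectors P Z.

Lemma iid_measurable i j : measurable_fun setT (Z i j).
Proof. by case: iidZ. Qed.

Lemma measurable_iid_joint i S : measurable S -> measurable (joint (Z i) @^-1` S).
Proof.
move=> mS; rewrite -[X in measurable X]setTI.
by apply: measurable_joint => //; exact: iid_measurable.
Qed.

Lemma iid_rect_event_indep i k A1 A2 : i != k ->
  (forall j, measurable (A1 j)) -> (forall j, measurable (A2 j)) ->
  P (rect_event (Z i) A1 `&` rect_event (Z k) A2) =
  (P (rect_event (Z i) A1) * P (rect_event (Z k) A2))%E.
Proof.
move=> ik mA1 mA2; case: iidZ => _ [prodZ _].
pose A l := if l == i then A1 else A2.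
have Ai : A i = A1 by rewrite /A eqxx.
have Ak : A k = A2 by rewrite /A eq_sym (negbTE ik).
have := prodZ [:: i; k] A; rewrite /= inE ik !big_cons big_nil mule1 Ai Ak.
move=> <- //; last by move=> l j; rewrite /A; case: (l == i).
congr (P _); apply/seteqP; split => w /=.
  by move=> [wi wk] l; rewrite /= !inE => /orP[] /eqP ->; rewrite ?Ai ?Ak.
by move=> wik; split; [move: (wik i) | move: (wik k)];
  rewrite /= !inE eqxx ?orbT ?Ai ?Ak; apply.
Qed.

Lemma iid_joint_indep i k S1 S2 : i != k -> measurable S1 -> measurable S2 ->
  P (joint (Z i) @^-1` S1 `&` joint (Z k) @^-1` S2) =
  (P (joint (Z i) @^-1` S1) * P (joint (Z k) @^-1` S2))%E.
Proof.
move=> ik mS1 mS2.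
have indep_rect A2 : (forall j, measurable (A2 j)) ->
    P (joint (Z i) @^-1` S1 `&` rect_event (Z k) A2) =
    (P (joint (Z i) @^-1` S1) * P (rect_event (Z k) A2))%E.
  move=> mA2; apply: joint_indep_event mS1; first exact: iid_measurable.
    by apply: measurable_rect_event => //; exact: iid_measurable.
  by move=> A1 mA1; exact: iid_rect_event_indep.
rewrite setIC muleC; apply: joint_indep_event mS2; first exact: iid_measurable.
  exact: measurable_iid_joint.
by move=> A2 mA2; rewrite setIC muleC indep_rect.
Qed.

Lemma iid_joint_ident i S : measurable S ->
  P (joint (Z i) @^-1` S) = P (joint (Z 0) @^-1` S).
Proof.
case: iidZ => _ [_ identZ]; apply: joint_dist_eq; try exact: iid_measurable.
exact: identZ.
Qed.

End iid.

Section bounded_mfun.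
Context {d} {Omega : measurableType d} {R : realType}.
Implicit Types (f g : Omega -> R) (A : set Omega).

Definition bounded_mfun f :=
  measurable_fun setT f /\ exists M, forall x, `|f x| <= M.

Lemma bounded_mfun_cst c : bounded_mfun (fun=> c).
Proof. by split; [exact: measurable_cst | exists `|c|]. Qed.

Lemma bounded_mfun_indic A : measurable A -> bounded_mfun \1_A.
Proof.
move=> mA; split; first exact: measurable_indic.
by exists 1 => x; rewrite indicE; case: (x \in A); rewrite ?normr1 ?normr0.
Qed.

Lemma bounded_mfunD f g :
  bounded_mfun f -> bounded_mfun g -> bounded_mfun (fun x => f x + g x).
Proof.
move=> [mf [M fM]] [mg [N gN]]; split; first exact: measurable_funD.
by exists (M + N) => x; rewrite (le_trans (ler_normD _ _)) // lerD.
Qed.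

Lemma bounded_mfunM f g :
  bounded_mfun f -> bounded_mfun g -> bounded_mfun (fun x => f x * g x).
Proof.
move=> [mf [M fM]] [mg [N gN]]; split; first exact: measurable_funM.
by exists (M * N) => x; rewrite normrM ler_pM.
Qed.

Lemma bounded_mfun_sqr f : bounded_mfun f -> bounded_mfun (fun x => f x ^+ 2).
Proof. by move=> bf; exact: bounded_mfunM. Qed.

Lemma bounded_mfunN f : bounded_mfun f -> bounded_mfun (fun x => - f x).
Proof.
move=> [mf [M fM]]; split; first exact: measurable_funN.
by exists M => x; rewrite normrN.
Qed.

Lemma bounded_mfun_norm f : bounded_mfun f -> bounded_mfun (fun x => `|f x|).
Proof.
move=> [mf [M fM]]; split; first exact: measurableT_comp.
by exists M => x; rewrite normr_id.
Qed.

Lemma bounded_mfun_sum (I : Type) (s : seq I) (F : I -> Omega -> R) :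
  (forall i, bounded_mfun (F i)) -> bounded_mfun (fun x => \sum_(i <- s) F i x).
Proof.
move=> bF; elim: s => [|i s IHs].
  by under eq_fun do rewrite big_nil; exact: bounded_mfun_cst.
by under eq_fun do rewrite big_cons; exact: bounded_mfunD.
Qed.

Lemma measurable_bounded_mfun_le f g :
  bounded_mfun f -> bounded_mfun g -> measurable [set x | f x <= g x].
Proof.
move=> [mf _] [mg _]; rewrite -[X in measurable X]setTI.
exact: measurable_fun_le.
Qed.

End bounded_mfun.

Create HintDb bounded_mfun.
#[global] Hint Resolve bounded_mfun_cst bounded_mfun_indic bounded_mfunD
  bounded_mfunM bounded_mfun_sqr bounded_mfunN bounded_mfun_norm
  bounded_mfun_sum : bounded_mfun.

Definition freq {d} {Omega : measurableType d} {R : realType}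
  (E : nat -> set Omega) (n : nat) (x : Omega) : R :=
  n%:R^-1 * \sum_(i < n) \1_(E i) x.

Lemma bounded_mfun_freq {d} {Omega : measurableType d} {R : realType}
  (E : nat -> set Omega) n :
  (forall i, measurable (E i)) -> bounded_mfun (freq E n : Omega -> R).
Proof. by move=> mE; rewrite /freq; auto with bounded_mfun. Qed.

Lemma bounded_mfun_integrable {d} {Omega : measurableType d} {R : realType}
  (mu : {finite_measure set Omega -> \bar R}) (f : Omega -> R) :
  bounded_mfun f -> mu.-integrable setT (EFin \o f).
Proof.
move=> [mf [M fM]]; apply: measurable_bounded_integrable => //.
  by rewrite ltey_eq fin_num_measure.
exists M; split; first exact: num_real.
by move=> N MN x _; exact: le_trans (fM x) (ltW MN).
Qed.

Section bounded_Rintegral.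
Context {d} {Omega : measurableType d} {R : realType}.
Variable P : probability Omega R.
Implicit Types (f g : Omega -> R) (A : set Omega).

Lemma Rintegral_indic A : measurable A -> \int[P]_x \1_A x = fine (P A).
Proof. by move=> mA; rewrite /Rintegral integral_indic // setIT. Qed.

Lemma RintegralD_bounded f g : bounded_mfun f -> bounded_mfun g ->
  \int[P]_x (f x + g x) = \int[P]_x f x + \int[P]_x g x.
Proof. by move=> bf bg; rewrite RintegralD //; exact: bounded_mfun_integrable. Qed.

Lemma RintegralZl_bounded c f : bounded_mfun f ->
  \int[P]_x (c * f x) = c * \int[P]_x f x.
Proof. by move=> bf; rewrite RintegralZl //; exact: bounded_mfun_integrable. Qed.

Lemma Rintegral_sum_bounded (I : Type) (s : seq I) (F : I -> Omega -> R) :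
  (forall i, bounded_mfun (F i)) ->
  \int[P]_x (\sum_(i <- s) F i x) = \sum_(i <- s) \int[P]_x F i x.
Proof.
move=> bF; elim: s => [|i s IHs].
  by under eq_Rintegral do rewrite big_nil; rewrite big_nil Rintegral_cst // mul0r.
under eq_Rintegral do rewrite big_cons.
by rewrite RintegralD_bounded ?IHs ?big_cons; auto with bounded_mfun.
Qed.

Lemma markov_bounded f a : bounded_mfun f -> 0 < a ->
  a * fine (P [set x | a <= f x]) <= \int[P]_x `|f x|.
Proof.
move=> bf a0.
have mfa : measurable [set x | a <= f x].
  by apply: measurable_bounded_mfun_le; auto with bounded_mfun.
rewrite -Rintegral_indic // -RintegralZl_bounded; last exact: bounded_mfun_indic.
apply: le_Rintegral => //; try by apply: bounded_mfun_integrable; auto with bounded_mfun.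
move=> x _; rewrite indicE; case: (boolP (x \in _)) => [/set_mem /= afx|_].
  by rewrite mulr1 (le_trans afx) // ler_norm.
by rewrite mulr0.
Qed.

Lemma markov_freq (E : nat -> set Omega) n a :
  (forall i, measurable (E i)) -> 0 < a ->
  a * fine (P [set x | a <= freq E n x]) <= n%:R^-1 * \sum_(i < n) fine (P (E i)).
Proof.
move=> mE a0; apply: le_trans (markov_bounded _ _ (bounded_mfun_freq _ n mE) a0) _.
have freq_ge0 x : 0 <= freq E n x :> R by rewrite mulr_ge0 ?invr_ge0 ?sumr_ge0.
under eq_Rintegral do rewrite ger0_norm //.
rewrite RintegralZl_bounded; last by auto with bounded_mfun.
rewrite Rintegral_sum_bounded; last by auto with bounded_mfun.
by under eq_bigr do rewrite Rintegral_indic //.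
Qed.

End bounded_Rintegral.

Lemma fine_measure_le_setU {d} {Omega : measurableType d} {R : realType}
  (mu : {finite_measure set Omega -> \bar R}) (A B1 B2 : set Omega) :
  A `<=` B1 `|` B2 -> measurable A -> measurable B1 -> measurable B2 ->
  fine (mu A) <= fine (mu B1) + fine (mu B2).
Proof.
move=> AB mA mB1 mB2; rewrite -lee_fin EFinD !fineK ?fin_num_measure //.
apply: le_trans (measureU2 _ _ _) => //.
by apply: le_measure AB; rewrite inE //; exact: measurableU.
Qed.

Section pairwise_independent_events.
Context {d} {Omega : measurableType d} {R : realType} (P : probability Omega R).
Variables (E : nat -> set Omega) (q : R).
Hypotheses (mE : forall i, measurable (E i)) (PE : forall i, P (E i) = q%:E)
  (indepE : forall i k, i != k -> P (E i `&` E k) = (P (E i) * P (E k))%E).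

Lemma Rintegral_centered_indicM i k :
  \int[P]_x ((\1_(E i) x - q) * (\1_(E k) x - q)) = (i == k)%:R * (q - q ^+ 2).
Proof.
have mEik := measurableI _ _ (mE i) (mE k).
have expand x : (\1_(E i) x - q) * (\1_(E k) x - q) =
    \1_(E i `&` E k) x + - q * \1_(E i) x + - q * \1_(E k) x + q ^+ 2.
  by rewrite indicI /=; ring.
have P1 : fine (P setT) = 1 by rewrite probability_setT.
under eq_Rintegral do rewrite expand.
rewrite !RintegralD_bounded; try by auto with bounded_mfun.
rewrite !RintegralZl_bounded; try by auto with bounded_mfun.
rewrite Rintegral_cst // P1 mulr1 !Rintegral_indic // !PE /=.
have [<-|ik] := eqVneq i k; first by rewrite setIid PE /=; ring.
by rewrite indepE // !PE /=; ring.
Qed.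

Lemma Rintegral_sqr_sum_centered_indic n :
  \int[P]_x ((\sum_(i < n) (\1_(E i) x - q)) ^+ 2) = n%:R * (q - q ^+ 2).
Proof.
under eq_Rintegral do rewrite expr2 mulr_suml.
under eq_Rintegral do under eq_bigr do rewrite mulr_sumr.
rewrite Rintegral_sum_bounded; last by auto with bounded_mfun.
transitivity (\sum_(i < n) (q - q ^+ 2)).
  apply: eq_bigr => i _; rewrite Rintegral_sum_bounded; last by auto with bounded_mfun.
  under eq_bigr do rewrite Rintegral_centered_indicM.
  rewrite (bigD1 i) //= eqxx mul1r big1 ?addr0 // => k ki.
  have /negbTE -> : (i != k :> nat) by rewrite eq_sym; exact: ki.
  by rewrite mul0r.
by rewrite sumr_const card_ord mulr_natl.
Qed.

Lemma chebyshev_freq n a : 0 < a -> (0 < n)%N ->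
  a ^+ 2 * fine (P [set x | a <= `|freq E n x - q|]) <= n%:R^-1.
Proof.
move=> a0 n0.
have n0R : n%:R != 0 :> R by rewrite pnatr_eq0 -lt0n.
have centered x :
    (freq E n x - q) ^+ 2 = n%:R^-2 * (\sum_(i < n) (\1_(E i) x - q)) ^+ 2.
  by rewrite /freq sumrB sumr_const card_ord -mulr_natr; field.
have -> : [set x | a <= `|freq E n x - q|] =
          [set x | a ^+ 2 <= (freq E n x - q) ^+ 2].
  have a_nneg : a \is Num.nneg by rewrite nnegrE ltW.
  apply/seteqP; split => x /=;
  by rewrite -(real_normK (num_real (_ - q))) ler_sqr // nnegrE.
apply: le_trans (markov_bounded P _ _ _ (exprn_gt0 2 a0)) _.
  by rewrite /freq; auto 10 with bounded_mfun.
under eq_Rintegral do rewrite ger0_norm ?sqr_ge0 // centered.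
rewrite RintegralZl_bounded; last by auto with bounded_mfun.
rewrite Rintegral_sqr_sum_centered_indic.
rewrite (_ : n%:R^-2 * _ = n%:R^-1 * (q - q ^+ 2)); last by field.
have q0 : 0 <= q by rewrite -lee_fin -(PE 0) measure_ge0.
have q1 : q <= 1 by rewrite -lee_fin -(PE 0) probability_le1.
by rewrite -[leRHS]mulr1 ler_wpM2l ?invr_ge0 //; nra.
Qed.

End pairwise_independent_events.

Section censored_regression.
Context {R : realType} {d} {Omega : measurableType d} (P : probability Omega R).
Variables (p : nat) (beta : 'I_p -> R) (C xi : nat -> Omega -> R)
  (X : nat -> 'I_p -> Omega -> R) (alpha : nat -> nat -> Omega -> R).
Hypotheses (iidZ : iid_vectors P (CXxi C xi X))
  (malpha : forall n i, measurable_fun setT (alpha n i)).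

Definition uncensored i : set Omega := [set w | lin X beta i w + xi i w <= C i w].

Definition contaminated n i : set Omega := [set w | alpha n i w != 0].

Definition uncensored_vect : set (mvect R (option (option 'I_p))) :=
  [set v | \sum_(k < p) v (Some (Some k)) * beta k + v (Some None) <= v None].

Lemma uncensored_joint i : uncensored i = joint (CXxi C xi X i) @^-1` uncensored_vect.
Proof. by []. Qed.

Lemma measurable_uncensored_vect : measurable uncensored_vect.
Proof.
rewrite -[X in measurable X]setTI; apply: measurable_fun_le => //;
  last exact: measurable_coord.
apply: measurable_funD; last exact: measurable_coord.
apply: measurable_sum => k; apply: measurable_funM; last exact: measurable_cst.
exact: measurable_coord.
Qed.

Lemma measurable_uncensored i : measurable (uncensored i).
Proof.
rewrite uncensored_joint; exact: (measurable_iid_joint iidZ) measurable_uncensored_vect.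
Qed.

Lemma P_uncensored i : P (uncensored i) = (pi_uc P C xi X beta)%:E.
Proof.
rewrite /pi_uc -/(uncensored 0) !uncensored_joint.
rewrite (iid_joint_ident iidZ i _ measurable_uncensored_vect) fineK //.
by rewrite fin_num_measure //; exact: (measurable_uncensored 0).
Qed.

Lemma uncensored_indep i k : i != k ->
  P (uncensored i `&` uncensored k) = (P (uncensored i) * P (uncensored k))%E.
Proof.
by move=> ik; rewrite !uncensored_joint; apply: iid_joint_indep => //;
  exact: measurable_uncensored_vect.
Qed.

Lemma measurable_contaminated n i : measurable (contaminated n i).
Proof.
have -> : contaminated n i = alpha n i @^-1` (~` [set 0]).
  by apply/seteqP; split => w /= /eqP.
by rewrite -[X in measurable X]setTI; apply: malpha => //; exact: measurableC.
Qed.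

Lemma bounded_mfun_delta n i : bounded_mfun (delta C xi X alpha beta n i).
Proof.
have mlin : measurable_fun setT (lin X beta i).
  apply: measurable_sum => k; apply: measurable_funM; last exact: measurable_cst.
  exact: (iid_measurable iidZ i (Some (Some k))).
split; last by exists 1 => w; rewrite /delta; case: ifP; rewrite ?normr1 ?normr0.
apply: measurable_fun_ifT; [|exact: measurable_cst|exact: measurable_cst].
apply: measurable_fun_ler; last exact: (iid_measurable iidZ i None).
apply: measurable_funD; last exact: (iid_measurable iidZ i (Some None)).
exact: measurable_funD.
Qed.

Lemma delta_indic_dev n i w :
  `|delta C xi X alpha beta n i w - \1_(uncensored i) w| <= \1_(contaminated n i) w.
Proof.
rewrite /delta !indicE.
have -> : (w \in uncensored i) = (lin X beta i w + xi i w <= C i w).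
  by apply/idP/idP => [/set_mem|/mem_set].
have [->|alpha_neq0] := eqVneq (alpha n i w) 0.
  by rewrite addr0; case: (_ <= C i w); rewrite /= subrr normr0 ler0n.
rewrite mem_set //=.
by do 2 case: (_ <= C i w); rewrite /= ?subrr ?subr0 ?sub0r ?normrN ?normr0 ?normr1.
Qed.

Lemma pi_uc_hat_dev_le n w (q : R) :
  `|pi_uc_hat C xi X alpha beta n w - q| <=
  `|freq uncensored n w - q| + freq (contaminated n) n w.
Proof.
have -> : pi_uc_hat C xi X alpha beta n w - q = (freq uncensored n w - q) +
    n%:R^-1 * \sum_(i < n) (delta C xi X alpha beta n i w - \1_(uncensored i) w).
  by rewrite /pi_uc_hat /freq sumrB; ring.
rewrite (le_trans (ler_normD _ _)) // lerD2l normrM ger0_norm ?invr_ge0 //.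
rewrite ler_wpM2l ?invr_ge0 // (le_trans (ler_norm_sum _ _ _)) //.
by apply: ler_sum => i _; exact: delta_indic_dev.
Qed.

Lemma bounded_mfun_pi_uc_hat n : bounded_mfun (pi_uc_hat C xi X alpha beta n).
Proof.
rewrite /pi_uc_hat; apply: bounded_mfunM; first exact: bounded_mfun_cst.
by apply: bounded_mfun_sum => i; exact: bounded_mfun_delta.
Qed.

Lemma measurable_pi_uc_hat_dev n eps q :
  measurable [set w | eps <= `|pi_uc_hat C xi X alpha beta n w - q|].
Proof.
apply: measurable_bounded_mfun_le; first exact: bounded_mfun_cst.
by apply: bounded_mfun_norm; apply: bounded_mfunD (bounded_mfun_pi_uc_hat n) _;
  auto with bounded_mfun.
Qed.

Lemma pi_uc_hat_dev_sub n eps q :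
  [set w | eps <= `|pi_uc_hat C xi X alpha beta n w - q|] `<=`
  [set w | eps / 2 <= `|freq uncensored n w - q|] `|`
  [set w | eps / 2 <= freq (contaminated n) n w].
Proof.
move=> w /= /le_trans /(_ (pi_uc_hat_dev_le n w q)) eps_le.
have [|freq_lt] := leP (eps / 2) (freq (contaminated n) n w); first by right.
by left; lra.
Qed.

Hypothesis Palpha : forall n i, P (contaminated n i) = pi_alpha P alpha n.

Lemma pi_uc_hat_tail_le n eps : (0 < n)%N -> 0 < eps ->
  fine (P [set w | eps <= `|pi_uc_hat C xi X alpha beta n w - pi_uc P C xi X beta|])
  <= (eps / 2) ^- 2 * n%:R^-1 + (eps / 2)^-1 * fine (pi_alpha P alpha n).
Proof.
move=> n0 eps0; have e0 : 0 < eps / 2 by rewrite divr_gt0.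
apply: le_trans (fine_measure_le_setU P _ _ _ (pi_uc_hat_dev_sub n eps _) _ _ _) _.
- exact: measurable_pi_uc_hat_dev.
- apply: measurable_bounded_mfun_le; rewrite /freq;
  by auto 10 using measurable_uncensored with bounded_mfun.
- apply: measurable_bounded_mfun_le; first exact: bounded_mfun_cst.
  exact/bounded_mfun_freq/measurable_contaminated.
apply: lerD.
  rewrite -(ler_pM2l (exprn_gt0 2 e0)) mulrA mulfV ?mul1r ?expf_neq0 ?gt_eqF //.
  exact: (chebyshev_freq P _ _ measurable_uncensored P_uncensored uncensored_indep).
rewrite -(ler_pM2l e0) mulrA mulfV ?mul1r ?gt_eqF //.
have sum_contaminated :
    \sum_(i < n) fine (P (contaminated n i)) = n%:R * fine (pi_alpha P alpha n).
  by under eq_bigr do rewrite Palpha; rewrite sumr_const card_ord mulr_natl.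
have := markov_freq P _ n _ (measurable_contaminated n) e0.
by rewrite sum_contaminated mulKf // pnatr_eq0 -lt0n.
Qed.

End censored_regression.

Lemma cvg_invn {R : realType} : (n%:R^-1 : R) @[n --> \oo] --> 0.
Proof. by rewrite -cvg_shiftS; exact: cvg_harmonic. Qed.

Theorem lemma2 (R : realType) (d : measure_display) (Omega : measurableType d)
  (P : probability Omega R) (p : nat) (beta : 'I_p -> R)
  (C xi : nat -> Omega -> R) (X : nat -> 'I_p -> Omega -> R)
  (alpha : nat -> nat -> Omega -> R) :
  iid_vectors P (CXxi C xi X) ->
  (forall n i, measurable_fun setT (alpha n i)) ->
  (forall n i, P [set w | alpha n i w != 0] = pi_alpha P alpha n) ->
  pi_alpha P alpha n @[n --> \oo] --> 0%E ->
  forall eps : R, 0 < eps ->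
    P [set w | eps <= `| pi_uc_hat C xi X alpha beta n w - pi_uc P C xi X beta |]
      @[n --> \oo] --> 0%E.
Proof.
move=> iidZ malpha Palpha pi_alpha0 eps eps0.
pose bound n := (eps / 2) ^- 2 * n%:R^-1 + (eps / 2)^-1 * fine (pi_alpha P alpha n).
apply: cvg_EFin.
  apply: nearW => n; rewrite fin_num_measure //.
  exact: measurable_pi_uc_hat_dev iidZ malpha _ _ _.
apply: (@squeeze_cvgr _ _ _ _ (fun=> 0) bound); last 2 first.
- exact: cvg_cst.
- rewrite (_ : 0 = (eps / 2) ^- 2 * 0 + (eps / 2)^-1 * 0); last by rewrite !mulr0 addr0.
  by apply: cvgD; apply: cvgMl_tmp; [exact: cvg_invn | exact: fine_cvg].
near=> n; rewrite fine_ge0 ?measure_ge0 //=.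
by apply: pi_uc_hat_tail_le => //; near: n; exact: nbhs_infty_gt.
Unshelve. all: by end_near.
Qed.
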